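(* Let $\varphi=\nu\tilde n.\sigma$ be an extended well-formed frame with respect to $\mathtt{s}\in\tilde n$ such that $\varphi\nvdash\mathtt{s}$. Let $U$, $V$ and $M$ be terms public with respect to $\varphi$, with all variables of $U$ and $V$ in $\mathrm{dom}(\sigma)$ and $M$ ground. Let $W,W'$ be subterms of terms in $\mathrm{ran}(\sigma)$ such that for every occurrence $q_{\mathtt{s}}$ of $\mathtt{s}$ in $W$ (respectively $W'$) there is an encryption occurrence $q_{\mathsf{enc}}$ in $W$ (respectively $W'$) with $q_{\mathsf{enc}}<q_{\mathtt{s}}$. Then (1) $U\sigma[\mathtt{s}/M]=V\sigma[\mathtt{s}/M]$ implies $U\sigma=V\sigma$; (2) $U\sigma[\mathtt{s}/M]=W[\mathtt{s}/M]$ implies $U\sigma=W$; (3) $W[\mathtt{s}/M]=W'[\mathtt{s}/M]$ implies $W=W'$ (all equalities syntactic).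
   Context: Terms over $\Sigma=\{\mathsf{enc}/3,\mathsf{dec}/2,\mathsf{enca}/3,\mathsf{deca}/2,\mathsf{pub}/1,\mathsf{priv}/1,\langle\cdot,\cdot\rangle/2,\pi_1/1,\pi_2/1,\mathsf{sign}/2,\mathsf{check}/3,\mathsf{retrieve}/1\}$, constants, names and variables. Equational theory $E$: $\pi_i(\langle z_1,z_2\rangle)=z_i$, $\mathsf{dec}(\mathsf{enc}(z_1,z_2,z_3),z_2)=z_1$, $\mathsf{deca}(\mathsf{enca}(z_1,\mathsf{pub}(z_2),z_3),\mathsf{priv}(z_2))=z_1$, $\mathsf{check}(z_1,\mathsf{sign}(z_1,\mathsf{priv}(z_2)),\mathsf{pub}(z_2))=\mathsf{ok}$, $\mathsf{retrieve}(\mathsf{sign}(z_1,z_2))=z_1$; left-to-right orientation is convergent, giving normal forms. Positions: sequences of positive integers, prefix order $\le$ ($<$ strict), $T|_p$ subterm, $\mathrm{head}(T)$ root symbol; $T[\mathtt{s}/M]$ replaces each occurrence of $\mathtt{s}$ by $M$. Frame $\varphi=\nu\tilde n.\sigma$: restricted names $\tilde n$, acyclic substitution $\sigma$. Public term w.r.t. $\varphi$: no name of $\tilde n$, no $\mathsf{priv}$. $\varphi\vdash M$: least relation containing $x\sigma$ ($x\in\mathrm{dom}(\sigma)$) and names outside $\tilde n$, closed under symbols other than $\mathsf{priv}$ and under $=_E$. An encryption occurrence $q$ in $U$ (head of $U|_q$ in $\{\mathsf{enc},\mathsf{enca}\}$) is an agent encryption w.r.t. names $\tilde m$ if $U|_{q\cdot3}\in\tilde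 m$, a probabilistic encryption w.r.t. a set of terms $S$ if for all $V\in S$ and $p$ with $V|_p=U|_{q\cdot3}$, $p=q'\cdot3$ with $V|_{q'}=U|_q$, and plaintext-above a position $q_T$ if $q\cdot1\le q_T$. Extended well-formed w.r.t. $\mathtt{s}$: (1) all terms of $\sigma$ are in normal form; (2) every agent encryption w.r.t. $\tilde n$ in $\sigma$ is probabilistic w.r.t. $\mathrm{ran}(\sigma)$; (3) for every occurrence $q_{\mathtt{s}}$ of $\mathtt{s}$ in $y\sigma$, $y\in\mathrm{dom}(\sigma)$, some agent encryption w.r.t. $\tilde n\setminus\{\mathtt{s}\}$ is plaintext-above $q_{\mathtt{s}}$; (4) the lowest such encryption $q_0$ satisfies $\mathrm{head}(y\sigma|_q)\in\{\langle\rangle,\mathsf{sign}\}$ for all $q_0<q<q_{\mathtt{s}}$. *)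

From Stdlib Require Import List Arith Relations.
Import ListNotations.

(* Function symbols of Sigma, grouped by arity (so arities are built in). *)
Inductive sym1 : Type := Pub | Priv | Pi1 | Pi2 | Retrieve.
Inductive sym2 : Type := Dec | Deca | Pair | Sign.
Inductive sym3 : Type := Enc | Enca | Check.

Inductive term : Type :=
| Var  (x : nat)
| Name (n : nat)
| Cst  (c : nat)
| Fn1  (f : sym1) (t1 : term)
| Fn2  (f : sym2) (t1 t2 : term)
| Fn3  (f : sym3) (t1 t2 t3 : term).

Definition ok : term := Cst 0.

(* root rewrite rules (left-to-right orientation of E), all instances *)
Inductive rule : term -> term -> Prop :=
| r_pi1 z1 z2 : rule (Fn1 Pi1 (Fn2 Pair z1 z2)) z1
| r_pi2 z1 z2 : rule (Fn1 Pi2 (Fn2 Pair z1 z2)) z2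
| r_dec z1 z2 z3 : rule (Fn2 Dec (Fn3 Enc z1 z2 z3) z2) z1
| r_deca z1 z2 z3 :
    rule (Fn2 Deca (Fn3 Enca z1 (Fn1 Pub z2) z3) (Fn1 Priv z2)) z1
| r_check z1 z2 :
    rule (Fn3 Check z1 (Fn2 Sign z1 (Fn1 Priv z2)) (Fn1 Pub z2)) ok
| r_retrieve z1 z2 : rule (Fn1 Retrieve (Fn2 Sign z1 z2)) z1.

Inductive step : term -> term -> Prop :=
| s_root t t' : rule t t' -> step t t'
| s_1 f a a' : step a a' -> step (Fn1 f a) (Fn1 f a')
| s_21 f a a' b : step a a' -> step (Fn2 f a b) (Fn2 f a' b)
| s_22 f a b b' : step b b' -> step (Fn2 f a b) (Fn2 f a b')
| s_31 f a a' b c : step a a' -> step (Fn3 f a b c) (Fn3 f a' b c)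
| s_32 f a b b' c : step b b' -> step (Fn3 f a b c) (Fn3 f a b' c)
| s_33 f a b c c' : step c c' -> step (Fn3 f a b c) (Fn3 f a b c').

Definition normal (t : term) : Prop := forall t', ~ step t t'.

(* equality modulo E: the congruence generated by the equations *)
Definition eqE : term -> term -> Prop := clos_refl_sym_trans term step.

Definition position := list nat.

(* T|_p (None if p is not a position of T); arguments numbered from 1 *)
Fixpoint subterm_at (t : term) (p : position) : option term :=
  match p with
  | [] => Some t
  | i :: p' =>
      match t, i with
      | Fn1 _ a, 1 => subterm_at a p'
      | Fn2 _ a _, 1 => subterm_at a p'
      | Fn2 _ _ b, 2 => subterm_at b p'
      | Fn3 _ a _ _, 1 => subterm_at a p'
      | Fn3 _ _ b _, 2 => subterm_at b p'
      | Fn3 _ _ _ c, 3 => subterm_at c p'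
      | _, _ => None
      end
  end.

Definition pos_le (p q : position) : Prop := exists r, q = p ++ r.
Definition pos_lt (p q : position) : Prop := exists r, r <> [] /\ q = p ++ r.

Definition is_enc (t : term) : Prop :=
  match t with Fn3 Enc _ _ _ | Fn3 Enca _ _ _ => True | _ => False end.

Definition is_pair_or_sign (t : term) : Prop :=
  match t with Fn2 Pair _ _ | Fn2 Sign _ _ => True | _ => False end.

Fixpoint repl (s : nat) (M t : term) : term :=
  match t with
  | Name n => if Nat.eqb n s then M else t
  | Var _ | Cst _ => t
  | Fn1 f a => Fn1 f (repl s M a)
  | Fn2 f a b => Fn2 f (repl s M a) (repl s M b)
  | Fn3 f a b c => Fn3 f (repl s M a) (repl s M b) (repl s M c)
  end.

Fixpoint has_var (x : nat) (t : term) : Prop :=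
  match t with
  | Var y => y = x
  | Name _ | Cst _ => False
  | Fn1 _ a => has_var x a
  | Fn2 _ a b => has_var x a \/ has_var x b
  | Fn3 _ a b c => has_var x a \/ has_var x b \/ has_var x c
  end.

Definition ground (t : term) : Prop := forall x, ~ has_var x t.

Fixpoint has_name (n : nat) (t : term) : Prop :=
  match t with
  | Name m => m = n
  | Var _ | Cst _ => False
  | Fn1 _ a => has_name n a
  | Fn2 _ a b => has_name n a \/ has_name n b
  | Fn3 _ a b c => has_name n a \/ has_name n b \/ has_name n c
  end.

Fixpoint has_priv (t : term) : Prop :=
  match t with
  | Var _ | Name _ | Cst _ => False
  | Fn1 Priv _ => True
  | Fn1 _ a => has_priv a
  | Fn2 _ a b => has_priv a \/ has_priv b
  | Fn3 _ a b c => has_priv a \/ has_priv b \/ has_priv c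
  end.

(* phi = nu names. sigma; sigma is a finite substitution given as a list of
   bindings (x, sigma(x)) with duplicate-free domain and ground range. *)
Record frame : Type := mkFrame {
  fr_names : list nat;
  fr_sigma : list (nat * term)
}.

Definition dom (phi : frame) : list nat := map fst (fr_sigma phi).
Definition ran (phi : frame) : list term := map snd (fr_sigma phi).

Definition frame_ok (phi : frame) : Prop :=
  NoDup (dom phi) /\ forall t, In t (ran phi) -> ground t.

Fixpoint lookup (sg : list (nat * term)) (x : nat) : option term :=
  match sg with
  | [] => None
  | (y, t) :: sg' => if Nat.eqb x y then Some t else lookup sg' x
  end.

Fixpoint apply_sigma (sg : list (nat * term)) (t : term) : term :=
  match t with
  | Var x => match lookup sg x with Some u => u | None => t end
  | Name _ | Cst _ => t
  | Fn1 f a => Fn1 f (apply_sigma sg a)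
  | Fn2 f a b => Fn2 f (apply_sigma sg a) (apply_sigma sg b)
  | Fn3 f a b c => Fn3 f (apply_sigma sg a) (apply_sigma sg b) (apply_sigma sg c)
  end.

Definition public (phi : frame) (t : term) : Prop :=
  (forall n, In n (fr_names phi) -> ~ has_name n t) /\ ~ has_priv t.

Inductive ded (phi : frame) : term -> Prop :=
| d_var x t : In (x, t) (fr_sigma phi) -> ded phi t
| d_name n : ~ In n (fr_names phi) -> ded phi (Name n)
| d_cst c : ded phi (Cst c)
| d_fn1 f a : f <> Priv -> ded phi a -> ded phi (Fn1 f a)
| d_fn2 f a b : ded phi a -> ded phi b -> ded phi (Fn2 f a b)
| d_fn3 f a b c : ded phi a -> ded phi b -> ded phi c -> ded phi (Fn3 f a b c)
| d_eq t t' : ded phi t -> eqE t t' -> ded phi t'.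

Definition agent_enc (m : list nat) (U : term) (q : position) : Prop :=
  (exists t, subterm_at U q = Some t /\ is_enc t) /\
  exists n, In n m /\ subterm_at U (q ++ [3]) = Some (Name n).

Definition prob_enc (S : list term) (U : term) (q : position) : Prop :=
  (exists t, subterm_at U q = Some t /\ is_enc t) /\
  forall V p, In V S -> subterm_at V p = subterm_at U (q ++ [3]) ->
    exists q', p = q' ++ [3] /\ subterm_at V q' = subterm_at U q.

Definition plaintext_above (q qT : position) : Prop := pos_le (q ++ [1]) qT.

Definition ext_well_formed (phi : frame) (s : nat) : Prop :=
  (forall t, In t (ran phi) -> normal t) /\
  (forall t q, In t (ran phi) -> agent_enc (fr_names phi) t q ->
     prob_enc (ran phi) t q) /\
  (forall t qs, In t (ran phi) -> subterm_at t qs = Some (Name s) ->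
     exists q, agent_enc (remove Nat.eq_dec s (fr_names phi)) t q /\
               plaintext_above q qs) /\
  (* (4) the lowest (deepest) such encryption q0 *)
  (forall t qs q0, In t (ran phi) -> subterm_at t qs = Some (Name s) ->
     agent_enc (remove Nat.eq_dec s (fr_names phi)) t q0 ->
     plaintext_above q0 qs ->
     (forall q1, agent_enc (remove Nat.eq_dec s (fr_names phi)) t q1 ->
        plaintext_above q1 qs -> ~ pos_lt q0 q1) ->
     forall q u, pos_lt q0 q -> pos_lt q qs -> subterm_at t q = Some u ->
       is_pair_or_sign u).

Definition s_under_enc (s : nat) (W : term) : Prop :=
  forall qs, subterm_at W qs = Some (Name s) ->
    exists qe u, subterm_at W qe = Some u /\ is_enc u /\ pos_lt qe qs.

Definition subterm_of_ran (phi : frame) (W : term) : Prop :=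
  exists t p, In t (ran phi) /\ subterm_at t p = Some W.

From Stdlib Require Import List Arith Lia Wellfounded Classical.
Import ListNotations.

(* Replacing [s] by [M] is injective on two kinds of terms: instances [Y0 sigma]
   of terms without restricted names, and subterms of [ran sigma] in which every
   occurrence of [s] lies strictly below an agent encryption keyed by a name of
   [n~ \ {s}].  Both kinds are closed under taking children except at such an
   agent encryption, so injectivity propagates by induction on terms.  At an
   agent encryption with key [r] the key survives the replacement ([M] contains
   no restricted name), and since agent encryptions are probabilistic, the only
   term of either kind carrying [r] as its key is that very encryption.
   Finally, the subterms [W], [W'] are of the second kind: the lowest agent
   encryption above an occurrence of [s] cannot lie strictly above an encryption
   of [W], since only pairs and signatures separate it from [s]. *)

Lemma subterm_at_nil t : subterm_at t [] = Some t.
Proof. destruct t; reflexivity. Qed.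

Lemma subterm_at_app t p q :
  subterm_at t (p ++ q) =
  match subterm_at t p with Some u => subterm_at u q | None => None end.
Proof.
  revert t; induction p as [|i p IH]; intro t; [destruct t; reflexivity|].
  destruct t; destruct i as [|[|[|[|i]]]]; simpl; auto.
Qed.

Lemma subterm_at_app_some t p u q :
  subterm_at t p = Some u -> subterm_at t (p ++ q) = subterm_at u q.
Proof. intro Hp. rewrite subterm_at_app, Hp. reflexivity. Qed.

Lemma term_child_ind (P : term -> Prop) :
  (forall X, (forall i c, subterm_at X [i] = Some c -> P c) -> P X) ->
  forall X, P X.
Proof.
  intros H X; induction X; apply H; intros i child Hc;
    destruct i as [|[|[|[|i]]]]; simpl in Hc; try discriminate;
    rewrite subterm_at_nil in Hc; congruence.
Qed.

Lemma pos_le_refl p : pos_le p p.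
Proof. exists []. symmetry. apply app_nil_r. Qed.

Lemma pos_lt_le p q : pos_lt p q -> pos_le p q.
Proof. intros [r [_ Hr]]. exists r. exact Hr. Qed.

Lemma pos_le_lt_or_eq p q : pos_le p q -> pos_lt p q \/ p = q.
Proof.
  intros [[|x r] ->].
  - right. symmetry. apply app_nil_r.
  - left. exists (x :: r). split; [discriminate|reflexivity].
Qed.

Lemma pos_lt_nil q : ~ pos_lt q [].
Proof. intros [r [Hr E]]. symmetry in E. apply app_eq_nil in E. tauto. Qed.

Lemma pos_lt_app p q q' : pos_lt q q' -> pos_lt (p ++ q) (p ++ q').
Proof. intros [r [Hr ->]]. exists r. split; [exact Hr|apply app_assoc]. Qed.

Lemma pos_lt_app_inv p q q' : pos_lt (p ++ q) (p ++ q') -> pos_lt q q'.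
Proof.
  intros [r [Hr E]]. rewrite <- app_assoc in E. apply app_inv_head in E.
  exists r. split; assumption.
Qed.

Lemma pos_lt_length p q : pos_lt p q -> length p < length q.
Proof. intros [r [Hr ->]]. rewrite length_app. destruct r; [congruence|simpl; lia]. Qed.

Lemma pos_le_length p q : pos_le p q -> length p <= length q.
Proof. intros [r ->]. rewrite length_app. lia. Qed.

Lemma pos_le_comparable p q L : pos_le p L -> pos_le q L -> pos_le p q \/ pos_le q p.
Proof.
  revert q L; induction p as [|x p IH]; intros q L [r1 H1] [r2 H2].
  - left; exists q; reflexivity.
  - destruct q as [|y q]; [right; exists (x :: p); reflexivity|].
    destruct L as [|z L]; [discriminate|].
    simpl in H1, H2; injection H1 as -> H1; injection H2 as -> H2.
    destruct (IH q L) as [[r H]|[r H]]; [exists r1; auto|exists r2; auto| |].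
    + left; exists r; simpl; congruence.
    + right; exists r; simpl; congruence.
Qed.

Lemma exists_maximal_position (P : position -> Prop) L :
  (forall q, P q -> pos_le q L) -> forall q, P q ->
  exists q0, P q0 /\ forall q1, P q1 -> ~ pos_lt q0 q1.
Proof.
  intros HL q.
  induction q as [q IH] using (well_founded_induction
    (wf_inverse_image _ _ lt (fun q => length L - length q) lt_wf)).
  intros Hq.
  destruct (classic (exists q1, P q1 /\ pos_lt q q1)) as [[q1 [Hq1 Hlt]]|Hmax].
  - apply (IH q1); [|exact Hq1].
    pose proof (pos_lt_length _ _ Hlt). pose proof (pos_le_length _ _ (HL q1 Hq1)). lia.
  - exists q. split; [exact Hq|]. intros q1 Hq1 Hlt. apply Hmax. eauto.
Qed.

Lemma plaintext_above_lt q qs : plaintext_above q qs -> pos_lt q qs.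
Proof.
  intros [r Hr]. exists (1 :: r). split; [discriminate|].
  rewrite Hr, <- app_assoc. reflexivity.
Qed.

Lemma enc_not_pair_or_sign u : is_enc u -> ~ is_pair_or_sign u.
Proof. destruct u as [| | | |f ? ?|f ? ? ?]; try destruct f; simpl; tauto. Qed.

Lemma agent_enc_app m t p u q :
  subterm_at t p = Some u -> agent_enc m t (p ++ q) <-> agent_enc m u q.
Proof.
  intro Hp. unfold agent_enc.
  rewrite <- app_assoc, !(subterm_at_app_some _ _ _ _ Hp). reflexivity.
Qed.

Lemma agent_enc_root_is_enc m X : agent_enc m X [] -> is_enc X.
Proof. intros [[e [He HeE]] _]. rewrite subterm_at_nil in He. congruence. Qed.

Lemma has_name_child n Y i c : subterm_at Y [i] = Some c -> has_name n c -> has_name n Y.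
Proof.
  intros Hc Hn. destruct Y; destruct i as [|[|[|[|i]]]]; simpl in Hc |- *;
    try discriminate; rewrite subterm_at_nil in Hc; injection Hc as <-; tauto.
Qed.

Lemma apply_sigma_child sg Y0 i c :
  subterm_at (apply_sigma sg Y0) [i] = Some c ->
  (exists x, Y0 = Var x) \/
  exists c0, subterm_at Y0 [i] = Some c0 /\ c = apply_sigma sg c0.
Proof.
  intro Hc. destruct Y0 as [x| | | | |]; [left; exists x; reflexivity| | | | |];
    right; destruct i as [|[|[|[|i]]]]; simpl in Hc; try discriminate;
    rewrite subterm_at_nil in Hc; injection Hc as <-; eexists;
    (split; [apply subterm_at_nil|reflexivity]).
Qed.

Lemma lookup_in_map_snd sg x u : lookup sg x = Some u -> In u (map snd sg).
Proof.
  induction sg as [|[y t] sg IH]; simpl; [discriminate|].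
  destruct (x =? y); [intros [=<-]; auto|auto].
Qed.

Lemma repl_eq_name s M c r : ~ has_name r M -> repl s M c = Name r -> c = Name r.
Proof.
  intros HM E. destruct c as [|n| | | |]; simpl in E; try discriminate.
  destruct (Nat.eqb_spec n s); [subst M; simpl in HM; tauto|exact E].
Qed.

Lemma repl_root_injective s M X Y :
  X <> Name s -> Y <> Name s ->
  (forall i cX cY, subterm_at X [i] = Some cX -> subterm_at Y [i] = Some cY ->
     repl s M cX = repl s M cY -> cX = cY) ->
  repl s M X = repl s M Y -> X = Y.
Proof.
  intros HX HY Hch E.
  destruct X as [x|n|c|f a|f a b|f a b c], Y as [y|m|d|g a'|g a' b'|g a' b' c'];
    simpl in E;
    try (destruct (Nat.eqb_spec n s); [subst; congruence|]);
    try (destruct (Nat.eqb_spec m s); [subst; congruence|]);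
    try discriminate; try congruence.
  all: [> injection E as -> Ea; f_equal; apply (Hch 1)
       | injection E as -> Ea Eb; f_equal; [apply (Hch 1)|apply (Hch 2)]
       | injection E as -> Ea Eb Ec; f_equal; [apply (Hch 1)|apply (Hch 2)|apply (Hch 3)]].
  all: first [exact (subterm_at_nil _)|assumption].
Qed.

Definition other_names (phi : frame) (s : nat) : list nat :=
  remove Nat.eq_dec s (fr_names phi).

Definition s_under_agent_enc (m : list nat) (s : nat) (Y : term) : Prop :=
  forall qs, subterm_at Y qs = Some (Name s) ->
    exists q, agent_enc m Y q /\ pos_lt q qs.

Definition no_restricted_names (phi : frame) (Y : term) : Prop :=
  forall n, In n (fr_names phi) -> ~ has_name n Y.

Definition guarded_in_ran (phi : frame) (s : nat) (Y : term) : Prop :=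
  subterm_of_ran phi Y /\ s_under_agent_enc (other_names phi s) s Y.

Definition public_instance (phi : frame) (Y : term) : Prop :=
  exists Y0, no_restricted_names phi Y0 /\ Y = apply_sigma (fr_sigma phi) Y0.

Definition s_protected (phi : frame) (s : nat) (Y : term) : Prop :=
  guarded_in_ran phi s Y \/ public_instance phi Y.

Definition guarded_agent_enc (phi : frame) (s : nat) (X : term) : Prop :=
  guarded_in_ran phi s X /\ agent_enc (other_names phi s) X [].

Lemma s_under_agent_enc_not_s m s Y : s_under_agent_enc m s Y -> Y <> Name s.
Proof.
  intros HY ->. destruct (HY [] (subterm_at_nil _)) as [q [_ Hq]].
  exact (pos_lt_nil _ Hq).
Qed.

Lemma guarded_in_ran_child phi s X i c :
  guarded_in_ran phi s X -> ~ agent_enc (other_names phi s) X [] ->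
  subterm_at X [i] = Some c -> guarded_in_ran phi s c.
Proof.
  intros [[t [p [Ht Hp]]] HX] Hroot Hc. split.
  - exists t, (p ++ [i]). split; [exact Ht|].
    rewrite (subterm_at_app_some _ _ _ _ Hp). exact Hc.
  - intros qs Hqs.
    destruct (HX ([i] ++ qs)) as [[|j q] [Hq [r [Hr E]]]].
    { rewrite (subterm_at_app_some _ _ _ _ Hc). exact Hqs. }
    + contradiction.
    + injection E as <- E. exists q. split.
      * apply (agent_enc_app _ X [i] c q Hc). exact Hq.
      * exists r. split; assumption.
Qed.

Section Injectivity.

Variables (phi : frame) (s : nat) (M : term).
Hypothesis Hwf : ext_well_formed phi s.
Hypothesis Hs : In s (fr_names phi).
Hypothesis HM : no_restricted_names phi M.

Lemma lookup_guarded_in_ran x u :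
  lookup (fr_sigma phi) x = Some u -> guarded_in_ran phi s u.
Proof.
  destruct Hwf as (_ & _ & Hguard & _). intro Hx.
  pose proof (lookup_in_map_snd _ _ _ Hx) as Hu. split.
  - exists u, []. split; [exact Hu|apply subterm_at_nil].
  - intros qs Hqs. destruct (Hguard u qs Hu Hqs) as [q [Hq Habove]].
    exists q. split; [exact Hq|exact (plaintext_above_lt _ _ Habove)].
Qed.

Lemma s_protected_not_s Y : s_protected phi s Y -> Y <> Name s.
Proof.
  intros [[_ HY]|[Y0 [HY0 ->]]]; [exact (s_under_agent_enc_not_s _ _ _ HY)|].
  destruct Y0 as [x|n| | | |]; simpl; try discriminate.
  - destruct (lookup (fr_sigma phi) x) eqn:Hx; [|discriminate].
    exact (s_under_agent_enc_not_s _ _ _ (proj2 (lookup_guarded_in_ran _ _ Hx))).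
  - intros [= ->]. exact (HY0 s Hs eq_refl).
Qed.

Lemma s_protected_child X i c :
  s_protected phi s X -> ~ guarded_agent_enc phi s X ->
  subterm_at X [i] = Some c -> s_protected phi s c.
Proof.
  intros [HX|[Y0 [HY0 ->]]] Hnot Hc.
  - left. apply (guarded_in_ran_child _ _ _ i c HX); [|exact Hc].
    intro Ha. exact (Hnot (conj HX Ha)).
  - destruct (apply_sigma_child _ _ _ _ Hc) as [[x ->]|[c0 [Hc0 ->]]].
    + simpl in Hc, Hnot. destruct (lookup (fr_sigma phi) x) as [u|] eqn:Hx;
        [|destruct i as [|[|[|[|i]]]]; discriminate].
      pose proof (lookup_guarded_in_ran _ _ Hx) as Hu.
      left. apply (guarded_in_ran_child _ _ _ i c Hu); [|exact Hc].
      intro Ha. exact (Hnot (conj Hu Ha)).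
    + right. exists c0. split; [|reflexivity].
      intros n Hn Hnc. exact (HY0 n Hn (has_name_child _ _ _ _ Hc0 Hnc)).
Qed.

(* This is where condition (2) of well-formedness is used. *)
Lemma agent_key_occurrence E r t p :
  subterm_of_ran phi E -> is_enc E -> subterm_at E [3] = Some (Name r) ->
  In r (fr_names phi) -> In t (ran phi) -> subterm_at t p = Some (Name r) ->
  exists q, p = q ++ [3] /\ subterm_at t q = Some E.
Proof.
  destruct Hwf as (_ & Hprob & _).
  intros [t0 [p0 [Ht0 Hp0]]] HE Hkey Hr Ht Hp.
  assert (Hagent : agent_enc (fr_names phi) t0 p0).
  { split; [exists E; auto|exists r; split; [exact Hr|]].
    rewrite (subterm_at_app_some _ _ _ _ Hp0). exact Hkey. }
  destruct (proj2 (Hprob t0 p0 Ht0 Hagent) t p Ht) as [q [Hq HqE]].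
  { rewrite Hp, (subterm_at_app_some _ _ _ _ Hp0). symmetry; exact Hkey. }
  exists q. split; congruence.
Qed.

Lemma agent_key_determines_enc E Y r :
  subterm_of_ran phi E -> is_enc E -> subterm_at E [3] = Some (Name r) ->
  In r (fr_names phi) ->
  subterm_of_ran phi Y -> subterm_at Y [3] = Some (Name r) -> Y = E.
Proof.
  intros HE HEenc HEkey Hr [t [p [Ht Hp]]] HYkey.
  destruct (agent_key_occurrence E r t (p ++ [3]) HE HEenc HEkey Hr Ht)
    as [q [Hpq Hq]].
  { rewrite (subterm_at_app_some _ _ _ _ Hp). exact HYkey. }
  apply app_inj_tail in Hpq as [<- _]. congruence.
Qed.

Lemma agent_key_not_in_ran E r :
  subterm_of_ran phi E -> is_enc E -> subterm_at E [3] = Some (Name r) ->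
  In r (fr_names phi) -> ~ In (Name r) (ran phi).
Proof.
  intros HE HEenc HEkey Hr Hran.
  destruct (agent_key_occurrence E r (Name r) [] HE HEenc HEkey Hr Hran eq_refl)
    as [[|? ?] [Hq _]]; discriminate.
Qed.

Lemma guarded_agent_enc_repl_eq X Y :
  guarded_agent_enc phi s X -> s_protected phi s Y ->
  repl s M X = repl s M Y -> X = Y.
Proof.
  intros [HX Hagent] HY E.
  pose proof (agent_enc_root_is_enc _ _ Hagent) as HXenc.
  destruct Hagent as [_ [r [Hr HXkey]]]. simpl in HXkey.
  apply in_remove in Hr as [Hr Hrs].
  destruct X as [| | | | |f a b c]; try contradiction.
  simpl in HXkey. rewrite subterm_at_nil in HXkey. injection HXkey as ->.
  pose proof (s_protected_not_s Y HY) as HYs.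
  destruct Y as [|n| | | |g a' b' c']; simpl in E;
    try (destruct (Nat.eqb_spec n s); [subst; congruence|]); try discriminate.
  injection E as <- _ _ Ekey. apply Nat.eqb_neq in Hrs. rewrite Hrs in Ekey.
  apply eq_sym, (repl_eq_name _ _ _ _ (HM r Hr)) in Ekey. subst c'.
  apply eq_sym, (agent_key_determines_enc _ _ r (proj1 HX) HXenc eq_refl Hr);
    [|reflexivity].
  destruct HY as [[HY _]|[Y0 [HY0 EY]]]; [exact HY|].
  destruct Y0 as [x| | | | |g0 a0 b0 c0]; simpl in EY; try discriminate.
  - destruct (lookup (fr_sigma phi) x) eqn:Hx; [|discriminate]. subst t.
    exists (Fn3 f a' b' (Name r)), []. split; [|apply subterm_at_nil].
    exact (lookup_in_map_snd _ _ _ Hx).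
  - injection EY as _ _ _ Ec0. exfalso.
    destruct c0 as [x|n| | | |]; simpl in Ec0; try discriminate.
    + destruct (lookup (fr_sigma phi) x) eqn:Hx; [|discriminate]. subst t.
      exact (agent_key_not_in_ran _ r (proj1 HX) HXenc eq_refl Hr
               (lookup_in_map_snd _ _ _ Hx)).
    + injection Ec0 as <-. apply (HY0 r Hr). simpl. auto.
Qed.

Lemma s_protected_repl_injective X Y :
  s_protected phi s X -> s_protected phi s Y -> repl s M X = repl s M Y -> X = Y.
Proof.
  revert Y; induction X as [X IH] using term_child_ind; intros Y HX HY E.
  destruct (classic (guarded_agent_enc phi s X)) as [HXa|HXn].
  { exact (guarded_agent_enc_repl_eq X Y HXa HY E). }
  destruct (classic (guarded_agent_enc phi s Y)) as [HYa|HYn].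
  { symmetry. exact (guarded_agent_enc_repl_eq Y X HYa HX (eq_sym E)). }
  apply (repl_root_injective s M); auto using s_protected_not_s.
  intros i cX cY HcX HcY. apply (IH i cX HcX cY).
  - exact (s_protected_child X i cX HX HXn HcX).
  - exact (s_protected_child Y i cY HY HYn HcY).
Qed.

Lemma ran_subterm_under_agent_enc W :
  subterm_of_ran phi W -> s_under_enc s W ->
  s_under_agent_enc (other_names phi s) s W.
Proof.
  destruct Hwf as (_ & _ & Hguard & Hlowest).
  intros [t [p0 [Ht Hp0]]] Henc qs Hqs.
  set (L := p0 ++ qs).
  assert (HL : subterm_at t L = Some (Name s)).
  { unfold L. rewrite (subterm_at_app_some _ _ _ _ Hp0). exact Hqs. }
  destruct (Hguard t L Ht HL) as [q Hq].
  destruct (exists_maximal_position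
              (fun q => agent_enc (other_names phi s) t q /\ plaintext_above q L) L)
    with (q := q) as [q0 [[Hq0 Habove] Hmax]]; [|exact Hq|].
  { intros q' [_ Hq']. exact (pos_lt_le _ _ (plaintext_above_lt _ _ Hq')). }
  destruct (Henc qs Hqs) as [qe [u [Hu [Huenc Hlt]]]].
  assert (Htu : subterm_at t (p0 ++ qe) = Some u).
  { rewrite (subterm_at_app_some _ _ _ _ Hp0). exact Hu. }
  assert (HeL : pos_lt (p0 ++ qe) L) by (apply pos_lt_app; exact Hlt).
  assert (Hinside : pos_le (p0 ++ qe) q0).
  { destruct (pos_le_comparable (p0 ++ qe) q0 L) as [Hle|Hle];
      [exact (pos_lt_le _ _ HeL)|exact (pos_lt_le _ _ (plaintext_above_lt _ _ Habove))
      |exact Hle|].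
    destruct (pos_le_lt_or_eq _ _ Hle) as [Hq0e| ->]; [|apply pos_le_refl].
    exfalso. apply (enc_not_pair_or_sign u Huenc).
    exact (Hlowest t L q0 Ht HL Hq0 Habove (fun q1 H1 H2 => Hmax q1 (conj H1 H2))
             (p0 ++ qe) u Hq0e HeL Htu). }
  destruct Hinside as [r Hr].
  exists (qe ++ r). split.
  - apply (agent_enc_app _ _ _ _ _ Hp0). rewrite app_assoc, <- Hr. exact Hq0.
  - apply (pos_lt_app_inv p0). rewrite app_assoc, <- Hr.
    exact (plaintext_above_lt _ _ Habove).
Qed.

End Injectivity.

Theorem corollary2p14 (phi : frame) (s : nat) (U V M W W' : term) :
  frame_ok phi ->
  ext_well_formed phi s ->
  In s (fr_names phi) ->
  ~ ded phi (Name s) ->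
  public phi U -> public phi V -> public phi M ->
  (forall x, has_var x U -> In x (dom phi)) ->
  (forall x, has_var x V -> In x (dom phi)) ->
  ground M ->
  subterm_of_ran phi W -> subterm_of_ran phi W' ->
  s_under_enc s W -> s_under_enc s W' ->
  (repl s M (apply_sigma (fr_sigma phi) U) = repl s M (apply_sigma (fr_sigma phi) V) ->
     apply_sigma (fr_sigma phi) U = apply_sigma (fr_sigma phi) V) /\
  (repl s M (apply_sigma (fr_sigma phi) U) = repl s M W ->
     apply_sigma (fr_sigma phi) U = W) /\
  (repl s M W = repl s M W' -> W = W').
Proof.
  intros _ Hwf Hs _ HU HV HM _ _ _ HW HW' HencW HencW'.
  assert (Hinst : forall Y0, public phi Y0 ->
            s_protected phi s (apply_sigma (fr_sigma phi) Y0)).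
  { intros Y0 [HY0 _]. right. exists Y0. split; [exact HY0|reflexivity]. }
  assert (Hran : forall Y, subterm_of_ran phi Y -> s_under_enc s Y ->
            s_protected phi s Y).
  { intros Y HY HencY. left.
    exact (conj HY (ran_subterm_under_agent_enc phi s Hwf Y HY HencY)). }
  pose proof (s_protected_repl_injective phi s M Hwf Hs (proj1 HM)) as Hinj.
  split; [|split]; apply Hinj; auto.
Qed.
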